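(* Let $\mathsf{Pos}(n)$ be the open cone of $n\times n$ real symmetric positive definite matrices in the space of symmetric matrices. Then $r(\mathsf{Pos}(n))=n$.
   Context: For an open acute convex cone $c$ in a finite-dimensional real vector space, its rank $r(c)$ is the infimum of positive integers $N$ with the property: whenever $v_0,v_1,\dots,v_N\in\overline c-\{0\}$ satisfy $\sum_{i=0}^Nv_i\in c$, there is an index $0\le j\le N$ with $\sum_{0\le i\le N,\,i\ne j}v_i\in c$. Here $\overline{\mathsf{Pos}(n)}$ is the cone of positive semidefinite matrices. *)

From HB Require Import structures.
From mathcomp Require Import all_boot all_order all_algebra.
From mathcomp Require Import reals.
Set Implicit Arguments. Unset Strict Implicit. Unset Printing Implicit Defensive.
Import Order.TTheory GRing.Theory Num.Theory.
Local Open Scope ring_scope.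

Definition posdef (R : realType) (n : nat) (A : 'M[R]_n) : Prop :=
  A^T = A /\ forall x : 'cV[R]_n, x != 0 -> 0 < (x^T *m A *m x) 0 0.

(* Positive semidefinite real symmetric matrices: the closure of Pos(n). *)
Definition possemidef (R : realType) (n : nat) (A : 'M[R]_n) : Prop :=
  A^T = A /\ forall x : 'cV[R]_n, 0 <= (x^T *m A *m x) 0 0.

Definition rank_property (V : zmodType) (c cl : V -> Prop) (N : nat) : Prop :=
  forall v : 'I_N.+1 -> V,
    (forall i, cl (v i) /\ v i != 0) ->
    c (\sum_(i < N.+1) v i) ->
    exists j : 'I_N.+1, c (\sum_(i < N.+1 | i != j) v i).

Definition cone_rank_is (V : zmodType) (c cl : V -> Prop) (r : nat) : Prop :=
  (0 < r)%N /\ rank_property c cl r /\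
  forall N : nat, (0 < N)%N -> (N < r)%N -> ~ rank_property c cl N.

From mathcomp Require Import all_boot all_order all_algebra.
From mathcomp Require Import reals.
From mathcomp Require Import ring lra.
From Stdlib Require Import Classical.
Set Implicit Arguments. Unset Strict Implicit. Unset Printing Implicit Defensive.
Import Order.TTheory GRing.Theory Num.Theory.
Local Open Scope ring_scope.

(** Upper bound: if no sum omitting one index were positive definite, there
would be nonzero vectors x_0, ..., x_n with x_j in the kernel of every v_i,
i <> j, and outside the kernel of v_j (the full sum is positive definite).
These are n + 1 vectors of an n-dimensional space, so some nontrivial
combination sum_k c_k x_k vanishes; applying v_j to it leaves c_j v_j x_j,
hence every c_j is 0.  Lower bound: for N < n, split the coordinates into
N + 1 nonempty blocks; the N + 1 diagonal projections onto the blocks sum to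
the identity, but dropping one of them kills a basis vector. *)

Definition qform (R : pzSemiRingType) n (A : 'M[R]_n) (x : 'cV[R]_n) : R :=
  (x^T *m A *m x) 0 0.

Lemma qform_sum (R : pzSemiRingType) n (I : Type) (r : seq I) (P : pred I)
    (A : I -> 'M[R]_n) x :
  qform (\sum_(i <- r | P i) A i) x = \sum_(i <- r | P i) qform (A i) x.
Proof. by rewrite /qform mulmx_sumr mulmx_suml summxE. Qed.

Lemma cV_linear_dependence (F : fieldType) m n (x : 'I_m -> 'cV[F]_n) :
  (n < m)%N -> exists2 c : 'rV[F]_m, c != 0 & \sum_k c 0 k *: x k = 0.
Proof.
move=> lt_nm; pose M := \matrix_(k, l) x k l 0.
have : kermx M != 0.
  rewrite -mxrank_eq0 mxrank_ker subn_eq0 -ltnNge.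
  exact: leq_ltn_trans (rank_leq_col M) lt_nm.
case/rowV0Pn => c /sub_kermxP cM nz_c; exists c => //.
apply: trmx_inj; rewrite raddf_sum trmx0 -[RHS]cM mulmx_sum_row.
by apply: eq_bigr => k _; apply/rowP => l; rewrite !mxE.
Qed.

Section Cones.
Variables (R : realType) (n : nat).
Implicit Types (A : 'M[R]_n) (x y : 'cV[R]_n).

Lemma trmx_sum_sym (I : finType) (P : pred I) (A : I -> 'M[R]_n) :
  (forall i, P i -> (A i)^T = A i) ->
  (\sum_(i | P i) A i)^T = \sum_(i | P i) A i.
Proof. by move=> symA; rewrite raddf_sum; apply: eq_bigr. Qed.

Lemma qform_addZ A x y t : A^T = A ->
  qform A (x + t *: y) =
    qform A x + 2 * t * (y^T *m A *m x) 0 0 + t ^+ 2 * qform A y.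
Proof.
move=> symA; rewrite /qform.
have -> : (x + t *: y)^T = x^T + t *: y^T by apply/matrixP => i j; rewrite !mxE.
have sym_bil : (x^T *m A *m y) = (y^T *m A *m x)^T.
  by rewrite !trmx_mul trmxK symA mulmxA.
rewrite !mulmxDl !mulmxDr -!scalemxAl -!scalemxAr sym_bil.
(* naming the products keeps [mxE] from expanding them *)
set bxx := x^T *m A *m x; set byx := y^T *m A *m x; set byy := y^T *m A *m y.
by rewrite !mxE; ring.
Qed.

Lemma psd_bilinear_eq0 A x y :
  possemidef A -> qform A x = 0 -> (y^T *m A *m x) 0 0 = 0.
Proof.
move=> [symA psdA] qx0; set b := (y^T *m A *m x) 0 0; set a := qform A y.
have a_ge0 : 0 <= a by exact: psdA.
have a1_neq0 : a + 1 != 0 by rewrite gt_eqF //; lra.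
pose u := b / (a + 1); have b_eq : b = u * (a + 1) by rewrite divfK.
(* with this u, qform A (x - u y) = - u^2 (a + 2) *)
have := psdA (x + (- u) *: y).
rewrite -/(qform _ _) qform_addZ // qx0 -/a -/b b_eq => q_ge0.
have -> : u = 0 by nra.
by rewrite mul0r.
Qed.

Lemma qform_eq0_ker A x : A *m x = 0 -> qform A x = 0.
Proof. by rewrite /qform -mulmxA => ->; rewrite mulmx0 mxE. Qed.

Lemma psd_qform_eq0 A x : possemidef A -> qform A x = 0 -> A *m x = 0.
Proof.
move=> psdA qx0; apply/matrixP => l k; rewrite (ord1 k) [RHS]mxE.
rewrite -(psd_bilinear_eq0 (delta_mx l 0) psdA qx0) trmx_delta -mulmxA -rowE.
by rewrite [RHS]mxE.
Qed.

Lemma not_posdef_psd_sum (I : finType) (P : pred I) (A : I -> 'M[R]_n) :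
  (forall i, P i -> possemidef (A i)) -> ~ posdef (\sum_(i | P i) A i) ->
  exists2 x : 'cV[R]_n, x != 0 & forall i, P i -> A i *m x = 0.
Proof.
move=> psdA not_pd.
have symS : (\sum_(i | P i) A i)^T = \sum_(i | P i) A i.
  by apply: trmx_sum_sym => i /psdA [].
have [x nz_x qx_le0] : exists2 x, x != 0 & ~ 0 < qform (\sum_(i | P i) A i) x.
  apply: NNPP => no_x; apply: not_pd; split => // x nz_x.
  by apply: NNPP => qx; apply: no_x; exists x.
exists x => // i Pi; apply: psd_qform_eq0; first exact: psdA.
have q_ge0 j : P j -> 0 <= qform (A j) x by move=> /psdA [_]; apply.
move/negP: qx_le0; rewrite qform_sum lt_neqAle sumr_ge0 // andbT negbK eq_sym.
by move=> /eqP /(psumr_eq0P q_ge0); apply.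
Qed.

Lemma posdef_rank_property : rank_property (@posdef R n) (@possemidef R n) n.
Proof.
move=> v v_psd pd_sum; apply: NNPP => no_j.
have [x nz_x ker_x] : exists2 x : 'I_n.+1 -> 'cV[R]_n,
    forall j, x j != 0 & forall j i, i != j -> v i *m x j = 0.
  apply: (fin_all_exists2 (P := fun _ y => y != 0)
    (Q := fun j y => forall i, i != j -> v i *m y = 0)) => j.
  apply: not_posdef_psd_sum.
    by move=> i _; case: (v_psd i).
  by move=> pd; apply: no_j; exists j.
have vx_neq0 j : v j *m x j != 0.
  apply/eqP => vx0; have := pd_sum.2 _ (nz_x j); apply/negP.
  rewrite -/(qform _ _) qform_sum (bigD1 j) //= qform_eq0_ker // add0r.
  by rewrite big1 ?ltxx // => i ij; rewrite qform_eq0_ker ?ker_x.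
have [c nz_c sum_cx] := cV_linear_dependence x (ltnSn n).
have [j /negP] := rV0Pn _ nz_c; apply.
have : v j *m \sum_k c 0 k *: x k = c 0 j *: (v j *m x j).
  rewrite mulmx_sumr (bigD1 j) //= -scalemxAr big1 ?addr0 // => k kj.
  by rewrite -scalemxAr ker_x 1?eq_sym // scaler0.
rewrite sum_cx mulmx0 => /esym /eqP.
by rewrite scaler_eq0 (negbTE (vx_neq0 j)) orbF.
Qed.

Lemma qform_diag (d : 'rV[R]_n) x :
  qform (diag_mx d) x = \sum_k d 0 k * x k 0 ^+ 2.
Proof.
rewrite /qform -mulmxA mul_diag_mx mxE; apply: eq_bigr => k _.
by rewrite !mxE expr2 mulrCA mulrA.
Qed.

Lemma possemidef_diag (d : 'rV[R]_n) :
  (forall k, 0 <= d 0 k) -> possemidef (diag_mx d).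
Proof.
move=> d_ge0; split=> [|x]; first exact: tr_diag_mx.
by rewrite -/(qform _ _) qform_diag sumr_ge0 // => k _; rewrite mulr_ge0 ?sqr_ge0.
Qed.

Lemma posdef_diag (d : 'rV[R]_n) :
  (forall k, 0 < d 0 k) -> posdef (diag_mx d).
Proof.
move=> d_gt0; split=> [|x nz_x]; first exact: tr_diag_mx.
have [l xl_neq0] := cV0Pn _ nz_x.
rewrite -/(qform _ _) qform_diag (bigD1 l) //= ltr_pwDl //.
  by rewrite mulr_gt0 // exprn_even_gt0 //= xl_neq0.
by rewrite sumr_ge0 // => k _; rewrite mulr_ge0 ?sqr_ge0 ?ltW.
Qed.

Lemma diag_not_posdef (d : 'rV[R]_n) l : d 0 l = 0 -> ~ posdef (diag_mx d).
Proof.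
move=> dl0 [_ pd].
have nz_e : delta_mx l 0 != 0 :> 'cV[R]_n.
  by apply/cV0Pn; exists l; rewrite mxE !eqxx oner_eq0.
have := pd _ nz_e; rewrite -/(qform _ _) qform_diag big1 ?ltxx // => k _.
have [->|kl] := eqVneq k l; first by rewrite dl0 mul0r.
by rewrite mxE (negbTE kl) expr0n mulr0.
Qed.

Definition block_projection N (g : 'I_n -> 'I_N.+1) (i : 'I_N.+1) : 'M[R]_n :=
  diag_mx (\row_k (g k == i)%:R).

Lemma sum_block_projection N (g : 'I_n -> 'I_N.+1) (P : pred 'I_N.+1) :
  \sum_(i | P i) block_projection g i = diag_mx (\row_k (P (g k))%:R).
Proof.
rewrite /block_projection -raddf_sum; congr diag_mx; apply/rowP => k.
rewrite summxE mxE; have [Pgk|nPgk] := boolP (P (g k)).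
  rewrite (bigD1 (g k)) //= mxE eqxx big1 ?addr0 // => i /andP [_ ne].
  by rewrite mxE eq_sym (negbTE ne).
rewrite big1 // => i Pi; rewrite mxE; case: eqP => // gki.
by rewrite gki Pi in nPgk.
Qed.

Lemma surjective_blocks_not_rank_property N (g : 'I_n -> 'I_N.+1) :
  (forall i, exists k, g k = i) ->
  ~ rank_property (@posdef R n) (@possemidef R n) N.
Proof.
move=> g_surj rank_N.
have [j pd_j] : exists j : 'I_N.+1,
    posdef (\sum_(i < N.+1 | i != j) block_projection g i).
  apply: rank_N => [i|].
    split; first by apply: possemidef_diag => k; rewrite mxE ler0n.
    have [k gk] := g_surj i; apply/eqP => /matrixP /(_ k k) /eqP.
    by rewrite !mxE gk !eqxx mulr1n oner_eq0.
  rewrite (sum_block_projection g xpredT).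
  by apply: posdef_diag => k; rewrite mxE ltr01.
have [k gk] := g_surj j; move: pd_j; rewrite sum_block_projection.
by apply: (diag_not_posdef (l := k)); rewrite mxE gk eqxx.
Qed.

End Cones.

Lemma inord_minn_surjective N n (lt_Nn : (N < n)%N) (i : 'I_N.+1) :
  exists k : 'I_n, inord (minn k N) = i.
Proof.
have lt_in : (i < n)%N by apply: leq_ltn_trans lt_Nn; rewrite -ltnS.
exists (Ordinal lt_in); rewrite /= (minn_idPl _) ?inord_val //.
by rewrite -ltnS.
Qed.

Theorem propositionC2 (R : realType) (n : nat) (hn : (0 < n)%N) :
  cone_rank_is (@posdef R n) (@possemidef R n) n.
Proof.
split=> //; split; first exact: posdef_rank_property.
move=> N _ lt_Nn.
exact: surjective_blocks_not_rank_property (inord_minn_surjective lt_Nn).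
Qed.
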